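(* Fix $t\in\{1,\dots,M\}$ and let $z^*\in F(\mathcal{T}_t)$. Set $r_t=\min\{d_{sep}(z^*,C_t),\ d_{esc}(z^*,C_t)\}$. Then every $z\in B(z^*,r_t)$ satisfies $K_t(z)=K_t(z^* )$.
   Context: Fix reals $W,H>0$, integers $N\ge N_m\ge 2$, and widths $w_i>0$, heights $h_i>0$ for $1\le i\le N_m$. Points of $\mathbb{R}^{2N}$ are written $z=(x,y)$ with $x=(x_1,\dots,x_N)$, $y=(y_1,\dots,y_N)$. For $1\le i\le N_m$ let $B_i^x=\{z: 0\le x_i\le W-w_i\}$, $B_i^y=\{z: 0\le y_i\le H-h_i\}$; for $i\neq j$ let $B_{i,j}=B_i^x\cap B_i^y\cap B_j^x\cap B_j^y$, $O^x_{i,j}=\{z: x_i+w_i\le x_j\}$, $O^y_{i,j}=\{z: y_i+h_i\le y_j\}$. Define the closed convex sets $C_{i,j,\mathsf{L}}=O^x_{i,j}\cap B_{i,j}$, $C_{i,j,\mathsf{R}}=O^x_{j,i}\cap B_{i,j}$, $C_{i,j,\mathsf{B}}=O^y_{i,j}\cap B_{i,j}$, $C_{i,j,\mathsf{A}}=O^y_{j,i}\cap B_{i,j}$ (assumed nonempty) and $C_{i,j}=C_{i,j,\mathsf{L}}\cup C_{i,j,\mathsf{R}}\cup C_{i,j,\mathsf{B}}\cup C_{i,j,\mathsf{A}}$. Enumerate the pairs $1\le i<j\le N_m$ by $t=1,\dots,M$ and write $C_t=C_{i,j}$, $C_{t,k}=C_{i,j,k}$ for $k\in\{\mathsf{L},\mathsf{R},\mathsf{B},\mathsf{A}\}$.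 With $\|\cdot\|$ the Euclidean norm and $\mathrm{d}(z,C)=\inf_{c\in C}\|z-c\|$: $\mathcal{P}_t(z)=\{c\in C_t:\|z-c\|=\mathrm{d}(z,C_t)\}$ (set-valued metric projection), $P_{t,k}(z)$ is the unique nearest point of $C_{t,k}$ to $z$; for a fixed relaxation parameter $\lambda\in(0,2)$, $\mathcal{T}_t(z)=\{z+\lambda(p-z):p\in\mathcal{P}_t(z)\}$ and $F(\mathcal{T}_t)=\{z: z\in\mathcal{T}_t(z)\}$. Active indices: $K_t(z)=\{k\in\{\mathsf{L},\mathsf{R},\mathsf{B},\mathsf{A}\}: P_{t,k}(z)\in\mathcal{P}_t(z)\}$. Escaping distance: $d_{esc}(z^*,C_t)=\inf\{\|z-z^*\| : z\notin C_{t,k}\text{ for some }k\in K_t(z^* )\}$. Separating distance: $d_{sep}(z^*,C_t)=\min\{\mathrm{d}(z^*,C_{t,k}) : k\notin K_t(z^* )\}$. $B(z,r)=\{z':\|z'-z\|<r\}$ is the open ball (empty if $r=0$). *)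

(* R : realType, points of R^{2N} as pairs (x,y) of
   functions 'I_N -> R (coordinates 0..N-1 stand for the paper's 1..N). *)
From HB Require Import structures.
From mathcomp Require Import all_boot all_order all_algebra.
From mathcomp Require Import boolp classical_sets reals constructive_ereal ereal.
Set Implicit Arguments. Unset Strict Implicit. Unset Printing Implicit Defensive.
Import Order.TTheory GRing.Theory Num.Theory.
Local Open Scope classical_set_scope.
Local Open Scope ring_scope.

Section Packing.
Variables (R : realType) (N : nat).

Definition pt := (('I_N -> R) * ('I_N -> R))%type.

Definition edist (z c : pt) : R :=
  Num.sqrt (\sum_(l < N) ((z.1 l - c.1 l) ^+ 2 + (z.2 l - c.2 l) ^+ 2)).

Definition dset (z : pt) (C : set pt) : R := inf [set edist z c | c in C].

Definition Proj (C : set pt) (z : pt) : set pt :=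
  [set c | C c /\ edist z c = dset z C].

Variables (W H : R) (w h : 'I_N -> R).

Definition Bx (i : 'I_N) : set pt := [set z | 0 <= z.1 i <= W - w i].
Definition By (i : 'I_N) : set pt := [set z | 0 <= z.2 i <= H - h i].
Definition Bij (i j : 'I_N) : set pt := Bx i `&` By i `&` Bx j `&` By j.
Definition Ox (i j : 'I_N) : set pt := [set z | z.1 i + w i <= z.1 j].
Definition Oy (i j : 'I_N) : set pt := [set z | z.2 i + h i <= z.2 j].

Inductive side := sL | sR | sB | sA.
Definition sides : seq side := [:: sL; sR; sB; sA].

Definition Cijk (i j : 'I_N) (k : side) : set pt :=
  match k with
  | sL => Ox i j `&` Bij i j
  | sR => Ox j i `&` Bij i j
  | sB => Oy i j `&` Bij i j
  | sA => Oy j i `&` Bij i j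
  end.

Definition Cij (i j : 'I_N) : set pt :=
  Cijk i j sL `|` Cijk i j sR `|` Cijk i j sB `|` Cijk i j sA.

Definition is_Pk (i j : 'I_N) (k : side) (z p : pt) : Prop :=
  Cijk i j k p /\ edist z p = dset z (Cijk i j k).

Definition Kact (i j : 'I_N) (z : pt) : set side :=
  [set k | exists p, is_Pk i j k z p /\ Proj (Cij i j) z p].

Definition relax (lam : R) (z p : pt) : pt :=
  (fun l => z.1 l + lam * (p.1 l - z.1 l), fun l => z.2 l + lam * (p.2 l - z.2 l)).

Definition fixT (lam : R) (i j : 'I_N) (z : pt) : Prop :=
  exists2 p, Proj (Cij i j) z p & z = relax lam z p.

Definition d_esc (i j : 'I_N) (zs : pt) : R :=
  inf [set edist z zs | z in [set z | exists2 k, Kact i j zs k & ~ Cijk i j k z]].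

(* separating distance (min over the empty family is +oo) *)
Definition d_sep (i j : 'I_N) (zs : pt) : \bar R :=
  \big[mine/+oo%E]_(k <- sides | `[< ~ Kact i j zs k >]) (dset zs (Cijk i j k))%:E.

Definition r_t (i j : 'I_N) (zs : pt) : \bar R :=
  mine (d_sep i j zs) (d_esc i j zs)%:E.

End Packing.

(* A fixed point z* of the relaxed projection with lam > 0 is one of its own
   nearest points, so z* lies in C_t; and at any point y of C_t the nearest
   point of C_t is y itself, so the active indices at y are exactly the pieces
   C_{t,k} containing y.  A point z closer to z* than the escaping distance
   stays in every active piece (hence in C_t), and a point closer than the
   separating distance meets no inactive piece.  So z lies in exactly the
   pieces that contain z*, and the two active sets coincide. *)
From HB Require Import structures.
From mathcomp Require Import all_boot all_order all_algebra.
From mathcomp Require Import boolp classical_sets reals constructive_ereal ereal.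
Import Order.TTheory GRing.Theory Num.Theory.
Local Open Scope classical_set_scope.
Local Open Scope ring_scope.

Set Implicit Arguments. Unset Strict Implicit.

Lemma side_comparable : comparable side.
Proof. by move=> k l; rewrite /decidable; decide equality. Qed.

HB.instance Definition _ := comparableMixin side_comparable.

Lemma mem_sides (k : side) : k \in sides.
Proof. by case: k; rewrite !inE eqxx ?orbT. Qed.

Section Distance.
Variables (R : realType) (N : nat).
Implicit Types (z c p : pt R N) (C : set (pt R N)).

Lemma edist_ge0 z c : 0 <= edist z c.
Proof. exact: sqrtr_ge0. Qed.

Lemma edistC z c : edist z c = edist c z.
Proof.
rewrite /edist; congr Num.sqrt; apply: eq_bigr => l _.
by rewrite -(sqrrN (z.1 l - c.1 l)) -(sqrrN (z.2 l - c.2 l)) !opprB.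
Qed.

Lemma edistxx z : edist z z = 0.
Proof. by rewrite /edist big1 ?sqrtr0 // => l _; rewrite !subrr expr0n addr0. Qed.

Lemma edist_eq0 z c : edist z c = 0 -> z = c.
Proof.
move=> /eqP; rewrite sqrtr_eq0 => sum_le0.
have sq_ge0 l : 0 <= (z.1 l - c.1 l) ^+ 2 + (z.2 l - c.2 l) ^+ 2.
  by rewrite addr_ge0 // sqr_ge0.
have /eqP : \sum_(l < N) ((z.1 l - c.1 l) ^+ 2 + (z.2 l - c.2 l) ^+ 2) = 0.
  by apply/eqP; rewrite eq_le sum_le0 sumr_ge0.
rewrite psumr_eq0 // => /allP coord_eq0.
have {}coord_eq0 l : (z.1 l == c.1 l) && (z.2 l == c.2 l).
  move: (coord_eq0 l (mem_index_enum _)) => /implyP/(_ isT).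
  by rewrite paddr_eq0 ?sqr_ge0 // !sqrf_eq0 !subr_eq0.
case: z c {sum_le0 sq_ge0} coord_eq0 => [z1 z2] [c1 c2] /= coord_eq.
by congr pair; apply: funext => l; case/andP: (coord_eq l) => /eqP ? /eqP ?.
Qed.

Lemma dset_le_edist z c C : C c -> dset z C <= edist z c.
Proof.
move=> Cc; apply: ge_inf; last by exists c.
by exists 0 => _ [d _ <-]; exact: edist_ge0.
Qed.

Lemma dset_eq0 z C : C z -> dset z C = 0.
Proof.
move=> Cz; apply/eqP; rewrite eq_le -{1}(edistxx z) dset_le_edist //=.
apply: lb_le_inf; first by exists (edist z z), z.
by move=> _ [c _ <-]; exact: edist_ge0.
Qed.

Lemma lt_dset_notin z zs C : edist z zs < dset zs C -> ~ C z.
Proof. by move=> lt_zC Cz; move: (dset_le_edist zs Cz); rewrite edistC leNgt lt_zC. Qed.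

Lemma Proj_self z C : C z -> Proj C z z.
Proof. by move=> Cz; split => //; rewrite edistxx dset_eq0. Qed.

Lemma relax_fixed (lam : R) z p : lam != 0 -> z = relax lam z p -> p = z.
Proof.
move=> lam_neq0; case: z p => [z1 z2] [p1 p2] [e1 e2].
have coord_eq (a b : R) : a = a + lam * (b - a) -> b = a.
  move=> /eqP; rewrite eq_sym -subr_eq0 addrAC subrr add0r mulf_eq0 (negPf lam_neq0).
  by rewrite subr_eq0 => /eqP.
by congr pair; apply: funext => l; apply: coord_eq;
  [exact: (congr1 (fun f => f l) e1) | exact: (congr1 (fun f => f l) e2)].
Qed.

End Distance.

Section Pieces.
Variables (R : realType) (N : nat) (W H : R) (w h : 'I_N -> R) (i j : 'I_N).
Implicit Types (z zs y : pt R N) (k : side).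

Local Notation Ck := (Cijk W H w h i j).
Local Notation C := (Cij W H w h i j).
Local Notation K := (Kact W H w h i j).

Lemma Cijk_sub_Cij k : Ck k `<=` C.
Proof. by case: k => y Cky; [left; left; left | left; left; right | left; right | right]. Qed.

Lemma Cij_exists_piece y : C y -> exists k, Ck k y.
Proof. by case=> [[[?|?]|?]|?]; [exists sL | exists sR | exists sB | exists sA]. Qed.

Lemma fixT_Cij (lam : R) y : lam != 0 -> fixT W H w h lam i j y -> C y.
Proof. by move=> lam_neq0 [p [Cp _] /(relax_fixed lam_neq0) p_eq]; rewrite -p_eq. Qed.

Lemma Kact_in_Cij y : C y -> K y = [set k | Ck k y].
Proof.
move=> Cy; apply/seteqP; split => k /=.
- by move=> [p [[Ckp _] [_ dist_yp]]]; rewrite dset_eq0 // in dist_yp;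
    rewrite (edist_eq0 dist_yp).
- move=> Cky; exists y; split; last exact: Proj_self.
  by split => //; rewrite edistxx dset_eq0.
Qed.

Lemma lt_d_esc_Cijk z zs k : edist z zs < d_esc W H w h i j zs -> K zs k -> Ck k z.
Proof.
move=> lt_esc Kk; apply: contrapT => notCkz.
have : d_esc W H w h i j zs <= edist z zs.
  apply: ge_inf; last by exists z => //; exists k.
  by exists 0 => _ [d _ <-]; exact: edist_ge0.
by rewrite leNgt lt_esc.
Qed.

Lemma d_sep_le_dset zs k : ~ K zs k -> (d_sep W H w h i j zs <= (dset zs (Ck k))%:E)%E.
Proof. by move=> notKk; apply: ge_bigmin_seq (mem_sides k) _; apply/asboolP. Qed.

Lemma lt_d_sep_notCijk z zs k :
  ((edist z zs)%:E < d_sep W H w h i j zs)%E -> ~ K zs k -> ~ Ck k z.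
Proof.
move=> lt_sep notKk; apply: (lt_dset_notin (zs := zs)).
by rewrite -lte_fin (lt_le_trans lt_sep) // d_sep_le_dset.
Qed.

End Pieces.

Theorem mainTheorem2 (R : realType) (W H : R) (N Nm : nat)
  (w h : 'I_N -> R) (lam : R) (i j : 'I_N) (zs : pt R N) :
  0 < W -> 0 < H -> (2 <= Nm)%N -> (Nm <= N)%N ->
  (forall l : 'I_N, (l < Nm)%N -> 0 < w l /\ 0 < h l) ->
  (forall (a b : 'I_N) (k : side), (a < Nm)%N -> (b < Nm)%N -> a != b ->
      Cijk W H w h a b k !=set0) ->
  0 < lam < 2 ->
  (i < j)%N -> (j < Nm)%N ->
  fixT W H w h lam i j zs ->
  forall z : pt R N, ((edist z zs)%:E < r_t W H w h i j zs)%E ->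
    Kact W H w h i j z = Kact W H w h i j zs.
Proof.
move=> _ _ _ _ _ _ /andP[lam_gt0 _] _ _ fix_zs z.
rewrite /r_t lt_min => /andP[lt_sep]; rewrite lte_fin => lt_esc.
have Czs := fixT_Cij (lt0r_neq0 lam_gt0) fix_zs.
have Kzs := Kact_in_Cij Czs.
have in_active k : Kact W H w h i j zs k -> Cijk W H w h i j k z := lt_d_esc_Cijk lt_esc.
have Cz : Cij W H w h i j z.
  have [k Ckzs] := Cij_exists_piece Czs.
  by apply: (Cijk_sub_Cij (k := k)) (in_active k _); rewrite Kzs.
rewrite (Kact_in_Cij Cz) Kzs; apply/seteqP; split => k /= Ckz.
- apply: contrapT => notCkzs.
  by apply: (lt_d_sep_notCijk lt_sep) Ckz; rewrite Kzs.
- by apply: in_active; rewrite Kzs.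
Qed.
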